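(* Let $v\in V$ and suppose that no epistasis to $v$ is weak. If $S\subseteq V$ satisfies $\{s\}\not\Rightarrow v$ for every $s\in S$, then $S'\not\Rightarrow v$ for every $S'\subseteq S$.
   Context: Fix $\ell\ge 1$, loci $V=\{0,\dots,\ell-1\}$, chromosomes $\vec y\in\{0,1\}^V$, and a fitness function $f:\{0,1\}^V\to\mathbb R$ to be maximized. An assignment $A$ is a set of pairs $(v,a)$ ($v\in V$, $a\in\{0,1\}$) with at most one pair per locus; $A[v]=a$ if $(v,a)\in A$, else $A[v]=*$; coverage $\mathcal C(A)=\{v:A[v]\ne *\}$. $\Psi_A$ (constrained optima) is the set of chromosomes agreeing with $A$ on $\mathcal C(A)$ and of maximum fitness among all such chromosomes; $\Psi_A[v]=\{\psi_v:\psi\in\Psi_A\}$. Epistasis: for $v\in V$ and nonempty $S\subseteq V\setminus\{v\}$, $S\Rightarrow v$ iff for every $s\in S$ there exists an assignment $A$ with $\mathcal C(A)=S$ such that $\Psi_A[v]\neq\Psi_{A\setminus\{(s,A[s])\}}[v]$; the empty set is never epistatic to anything. An epistasis $S\Rightarrow v$ with $|S|\ge2$ is weak if no nonempty proper subset $T\subsetneq S$ satisfies $T\Rightarrow v$. *)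

From mathcomp Require Import all_boot all_order all_algebra.
From mathcomp Require Import reals.
Set Implicit Arguments. Unset Strict Implicit. Unset Printing Implicit Defensive.
Import Order.TTheory GRing.Theory Num.Theory.
Local Open Scope ring_scope.

(* Loci V = {0,...,l-1} are 'I_l; chromosomes are {ffun 'I_l -> bool}.
   An assignment (at most one pair per locus) is a finite function
   'I_l -> option bool: A v = Some a iff (v,a) \in A, None iff A[v] = *. *)
Definition chrom (l : nat) := {ffun 'I_l -> bool}.
Definition assignment (l : nat) := {ffun 'I_l -> option bool}.

Definition coverage (l : nat) (A : assignment l) : {set 'I_l} :=
  [set v | A v != None].

Definition agrees (l : nat) (A : assignment l) (y : chrom l) : bool :=
  [forall v, if A v is Some a then y v == a else true].

Definition remove_locus (l : nat) (A : assignment l) (s : 'I_l) : assignment l :=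
  [ffun v => if v == s then None else A v].

Section Epistasis.
Variables (R : realType) (l : nat) (f : chrom l -> R).

Definition Psi (A : assignment l) : {set chrom l} :=
  [set y | agrees A y && [forall z, agrees A z ==> (f z <= f y)]].

Definition Psi_at (A : assignment l) (v : 'I_l) : {set bool} :=
  [set (y : chrom l) v | y in Psi A].

Definition epistatic (S : {set 'I_l}) (v : 'I_l) : Prop :=
  S != set0 /\ v \notin S /\
  forall s, s \in S -> exists A : assignment l,
    coverage A = S /\ Psi_at A v != Psi_at (remove_locus A s) v.

Definition weak_epistasis (S : {set 'I_l}) (v : 'I_l) : Prop :=
  epistatic S v /\ (2 <= #|S|)%N /\
  forall T : {set 'I_l}, T \proper S -> T != set0 -> ~ epistatic T v.
End Epistasis.

From mathcomp Require Import all_boot all_order all_algebra.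
From mathcomp Require Import reals.

(* Induction on #|S|: a nonempty S of size at most one is a singleton, and a
   larger epistatic S all of whose proper nonempty subsets are (inductively)
   not epistatic would be a weak epistasis. *)

Section NoWeakEpistasis.
Variables (R : realType) (l : nat) (f : chrom l -> R) (v : 'I_l).
Hypothesis no_weak : forall S : {set 'I_l}, ~ weak_epistasis f S v.

Lemma not_epistatic_of_singletons (S : {set 'I_l}) :
  (forall s, s \in S -> ~ epistatic f [set s] v) -> ~ epistatic f S v.
Proof.
have [n] := ubnP #|S|; elim: n S => // n IH S ltSn notS1 epiS.
have S_neq0 : S != set0 by case: epiS.
have [leS1 | gtS1] := leqP #|S| 1.
  have /cards1P [s defS] : #|S| == 1%N by rewrite eqn_leq leS1 card_gt0.
  by apply: (notS1 s); rewrite ?defS ?set11 // -defS.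
apply: (no_weak S); split=> //; split=> // T ltTS _.
apply: IH => [|s sT]; first exact: leq_trans (proper_card ltTS) _.
by apply: notS1; apply: (subsetP (proper_sub ltTS)).
Qed.

End NoWeakEpistasis.

Theorem proposition6 (R : realType) (l : nat) (f : chrom l -> R) (hl : (0 < l)%N) (v : 'I_l)
  (no_weak : forall S : {set 'I_l}, ~ weak_epistasis f S v)
  (S : {set 'I_l})
  (hS : forall s, s \in S -> ~ epistatic f [set s] v) :
  forall S' : {set 'I_l}, S' \subset S -> ~ epistatic f S' v.
Proof.
move=> S' subS'S; apply: not_epistatic_of_singletons => // s sS'.
exact/hS/(subsetP subS'S).
Qed.
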